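(* Let $L$ be a finite-dimensional Lie algebra over a field $F$. Then $L$ is supersolvable if and only if $\eta(L:M)=1$ for all maximal subalgebras $M$ of $L$.
   Context: $L$ is supersolvable if there is a chain $0=L_0\subset L_1\subset\cdots\subset L_n=L$ of ideals of $L$ with $\dim(L_{i}/L_{i-1})=1$ for all $i$. For a nonzero subalgebra $X$ of $L$, the strict core $k(X)$ is the sum of all ideals of $L$ that are proper subalgebras of $X$ (it is $0$ if there are none). For a maximal subalgebra $M$, a subalgebra $C$ is a completion of $M$ if $C\not\subseteq M$ but every proper subalgebra of $C$ that is an ideal of $L$ is contained in $M$; an ideal completion is a completion that is an ideal of $L$. The ideal index $\eta(L:M)$ is $\dim(C/k(C))$ for any ideal completion $C$ of $M$ (independent of the choice of $C$). *)

(* Finite-dimensional Lie algebras over a field F are modelled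
   as a vectType L over F (finite dimensional) with a bracket br. *)
From HB Require Import structures.
From mathcomp Require Import all_boot all_order all_algebra.
Set Implicit Arguments. Unset Strict Implicit. Unset Printing Implicit Defensive.
Import GRing.Theory.
Local Open Scope ring_scope.


Section Lie.
Variables (F : fieldType) (L : vectType F) (br : L -> L -> L).

Definition lie_bracket : Prop :=
  [/\ forall (a : F) x y z, br (a *: x + y) z = a *: br x z + br y z,
      forall (a : F) x y z, br z (a *: x + y) = a *: br z x + br z y,
      forall x, br x x = 0
    & forall x y z, br x (br y z) + br y (br z x) + br z (br x y) = 0].

Definition subalgebra (U : {vspace L}) : Prop :=
  forall u v, u \in U -> v \in U -> br u v \in U.

Definition lie_ideal (U : {vspace L}) : Prop :=
  forall x u, u \in U -> br x u \in U /\ br u x \in U.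

Definition maximal_subalgebra (M : {vspace L}) : Prop :=
  [/\ subalgebra M, M != fullv%VS &
      forall U : {vspace L}, subalgebra U -> (M <= U)%VS -> U = M \/ U = fullv%VS].

Definition supersolvable : Prop :=
  exists (n : nat) (Ls : nat -> {vspace L}),
    [/\ Ls 0%N = 0%VS, Ls n = fullv%VS,
        forall i, (i <= n)%N -> lie_ideal (Ls i)
      & forall i, (i < n)%N ->
          (Ls i <= Ls i.+1)%VS /\ \dim (Ls i.+1) = (\dim (Ls i)).+1].

(* K is the strict core k(X) of X: the sum of all ideals of L that are proper
   subalgebras of X, i.e. the least subspace containing all of them
   (the zero space when there are none). *)
Definition strict_core (X K : {vspace L}) : Prop :=
  (forall I : {vspace L}, lie_ideal I -> (I <= X)%VS -> I != X -> (I <= K)%VS) /\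
  (forall V : {vspace L},
      (forall I : {vspace L}, lie_ideal I -> (I <= X)%VS -> I != X -> (I <= V)%VS) ->
      (K <= V)%VS).

Definition completion (M C : {vspace L}) : Prop :=
  [/\ subalgebra C, ~~ (C <= M)%VS &
      forall I : {vspace L}, subalgebra I -> (I <= C)%VS -> I != C -> lie_ideal I ->
        (I <= M)%VS].

Definition ideal_completion (M C : {vspace L}) : Prop :=
  completion M C /\ lie_ideal C.

(* eta(L : M) = n, where eta(L:M) = dim (C / k(C)) for an ideal completion C
   (independent of the choice of C); since k(C) <= C, dim (C/k(C)) is
   \dim C - \dim k(C). *)
Definition ideal_index_is (M : {vspace L}) (n : nat) : Prop :=
  forall C K : {vspace L}, ideal_completion M C -> strict_core C K ->
    (\dim C - \dim K)%N = n.

End Lie.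

From HB Require Import structures.
From mathcomp Require Import all_boot all_order all_algebra.
From Stdlib Require Import Classical ClassicalEpsilon Lia.
From mathcomp Require Import zify.
Set Implicit Arguments. Unset Strict Implicit. Unset Printing Implicit Defensive.
Import GRing.Theory.
Local Open Scope ring_scope.

(* (=>) If C is an ideal completion of M and L_i is the first term of the chain of ideals
   containing C, then L_(i-1) :&: C is an ideal properly inside C, hence inside k(C), of
   codimension at most one in C.
   (<=) Given an ideal K, pick a minimal ideal H above K; by induction L/H has a chain of
   ideals with one-dimensional steps, and it suffices that dim H/K = 1. If some maximal
   subalgebra M >= K misses H, a minimal ideal C <= H outside M is an ideal completion
   of M with C + K = H and C :&: K = k(C), so dim H/K = eta(L:M) = 1. Otherwise H/K lies
   in the Frattini subalgebra of L/K, so it is abelian (Engel) and no subalgebra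
   supplements it modulo K. For y in L, the sum of K and the generalized eigenspaces of
   ad y for its eigenvalues on the factors of the chain of L/H is such a supplement as
   soon as ad y - l is injective on H/K for these eigenvalues. This rules out first
   that L^2 fails to centralise H/K, and then that some y does not act on H/K by a
   scalar; so every subspace of H/K is an ideal, and dim H/K = 1. *)

Lemma nat_minimal (P : nat -> Prop) :
  (exists n, P n) -> exists n, P n /\ forall m, P m -> (n <= m)%N.
Proof.
case=> n Pn; elim: n {-2}n (leqnn n) Pn => [|k IH] n hn Pn.
  by exists n; split=> // m _; move: hn; rewrite leqn0 => /eqP ->.
case: (classic (exists m, (m < n)%N /\ P m)) => [[m [hm Pm]]|hno].
  by apply: (IH m) => //; rewrite -ltnS (leq_trans hm hn).
by exists n; split=> // m Pm; rewrite leqNgt; apply/negP => hm; apply: hno; exists m.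
Qed.

Lemma first_failure (P : nat -> Prop) n :
  P 0%N -> ~ P n -> exists i, (i < n)%N /\ P i /\ ~ P i.+1.
Proof.
elim: n => [|n IH] P0 Pn //.
case: (classic (P n)) => Pn'; first by exists n.
by have [i [hi Pi]] := IH P0 Pn'; exists i; split=> //; apply: ltnW.
Qed.

Section VspaceFacts.
Variables (F : fieldType) (L : vectType F).
Implicit Types (U V W : {vspace L}) (f : 'End(L)).

Lemma vspace_min_dim (P : {vspace L} -> Prop) : (exists V, P V) ->
  exists V, P V /\ forall W, P W -> (\dim V <= \dim W)%N.
Proof.
move=> [V PV].
have [_ [[W [PW <-]] hmin]] := nat_minimal (P := fun n => exists W, P W /\ \dim W = n)
   (ex_intro _ _ (ex_intro _ V (conj PV erefl))).
by exists W; split=> // W' PW'; apply: hmin; exists W'.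
Qed.

Lemma vspace_max_dim (P : {vspace L} -> Prop) : (exists V, P V) ->
  exists V, P V /\ forall W, P W -> (\dim W <= \dim V)%N.
Proof.
move=> [V PV].
have [_ [[W [PW <-]] hmin]] :=
  nat_minimal (P := fun n => exists W, P W /\ (\dim {:L} - \dim W)%N = n)
   (ex_intro _ _ (ex_intro _ V (conj PV erefl))).
exists W; split=> // W' PW'; have := hmin _ (ex_intro _ W' (conj PW' erefl)).
by have := dimvS (subvf W); have := dimvS (subvf W'); lia.
Qed.

Lemma subv_dim_eq U V : (U <= V)%VS -> (\dim V <= \dim U)%N -> U = V.
Proof. by move=> UV dVU; apply/eqP; rewrite eqEdim UV dVU. Qed.

Lemma dim_add_line U w : w \notin U -> \dim (U + <[w]>) = (\dim U).+1.
Proof.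
move=> wU; have := dimv_sum_cap U <[w]>.
have -> : (U :&: <[w]> = 0)%VS.
  apply/eqP; rewrite -subv0; apply/subvP => v /memv_capP[vU /vlineP[k kv]]; subst v.
  rewrite memv0; have [->|k0] := eqVneq k 0; first by rewrite scale0r.
  by move: (memvZ k^-1 vU); rewrite scalerA mulVf // scale1r (negPf wU).
have w0 : w != 0 by apply: contraNneq wU => ->; apply: mem0v.
by rewrite dimv0 dim_vline w0 addn0 addn1.
Qed.

Lemma memv_add_line U V w0 : (U <= V)%VS -> (\dim V <= (\dim U).+1)%N ->
  w0 \in V -> w0 \notin U -> forall w, w \in V -> exists a c, a \in U /\ w = a + c *: w0.
Proof.
move=> UV dV w0V w0U w.
have <- : (U + <[w0]>)%VS = V.
  by apply: subv_dim_eq; rewrite ?subv_add ?UV -?memvE ?dim_add_line.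
by case/memv_addP => a aU [_ /vlineP[c ->] ->]; exists a, c.
Qed.

Lemma injective_mod_surjective f U V : (U <= V)%VS ->
  (forall v, v \in V -> f v \in V) -> (forall v, v \in U -> f v \in U) ->
  (forall v, v \in V -> f v \in U -> v \in U) -> (V <= f @: V + U)%VS.
Proof.
move=> UV fV fU inj.
have sub : (f @: V + U <= V)%VS.
  by rewrite subv_add UV andbT; apply/subvP => _ /memv_imgP[v vV ->]; apply: fV.
have ker : (V :&: lker f <= U :&: lker f)%VS.
  apply/subvP => v /memv_capP[vV vk]; rewrite memv_cap vk andbT inj //.
  by move: vk; rewrite memv_ker => /eqP ->; apply: mem0v.
have img : (f @: V :&: U <= f @: U)%VS.
  apply/subvP => _ /memv_capP[/memv_imgP[v vV ->] fvU]; exact/memv_img/inj.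
have := dimv_sum_cap (f @: V) U; have := limg_ker_dim f V.
have := limg_ker_dim f U; have := dimvS ker; have := dimvS img.
have := dimvS (capvSl U (lker f)) => *.
by rewrite (subv_dim_eq sub) //; lia.
Qed.

Definition lfun_iter f n : 'End(L) := iter n (fun g => f \o g)%VF \1%VF.

Lemma lfun_iterE f n v : lfun_iter f n v = iter n f v.
Proof. by elim: n => [|n IH]; rewrite /= ?id_lfunE // comp_lfunE -IH. Qed.

Lemma iter_lfunD f n u v : iter n f (u + v) = iter n f u + iter n f v.
Proof. by rewrite -!lfun_iterE; apply: raddfD. Qed.

(* Exceeds the Fitting index of every endomorphism of L. *)
Definition fit_exp := (\dim {:L}).+1.

Lemma vspace_chain_stable (S : nat -> {vspace L}) :
  (forall k, (S k <= S k.+1)%VS) ->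
  (forall k, (S k.+1 <= S k)%VS -> (S k.+2 <= S k.+1)%VS) ->
  forall m, (S m <= S fit_exp)%VS.
Proof.
move=> mono step.
have monoD i d : (S i <= S (i + d)%N)%VS.
  by elim: d => [|d IH]; rewrite ?addn0 // addnS (subv_trans IH).
have [k [hk Sk]] : exists k, (k < fit_exp)%N /\ (S k.+1 <= S k)%VS.
  apply: NNPP => hno.
  suff dimS k : (k <= fit_exp)%N -> (k <= \dim (S k))%N.
    by have := dimS _ (leqnn _); have := dimvS (subvf (S fit_exp)); rewrite /fit_exp; lia.
  elim: k => [|k IH] hk //; have /leqifP := dimv_leqif_sup (mono k).
  by case: ifP => [Sk _|_]; [case: hno; exists k | apply/leq_ltn_trans/IH/ltnW].
have stay d : (S (k + d)%N <= S k)%VS.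
  elim: d => [|d IH]; rewrite ?addn0 // addnS (subv_trans _ IH) //.
  by elim: d {IH} => [|d IHd]; rewrite ?addn0 // addnS step.
move=> m; case: (leqP m fit_exp) => hm; first by rewrite -(subnKC hm) monoD.
have km : (k <= m)%N by lia.
by rewrite -(subnKC km) (subv_trans (stay _)) // -(subnKC (ltnW hk)) monoD.
Qed.

Lemma iter_stable f U : (forall u, u \in U -> f u \in U) ->
  forall m v, iter m f v \in U -> iter fit_exp f v \in U.
Proof.
move=> fU m v; pose S k := (lfun_iter f k @^-1: U)%VS.
have memS k w : (w \in S k) = (iter k f w \in U) by rewrite -memv_preim lfun_iterE.
have chain := @vspace_chain_stable S.
rewrite -!memS; apply/subvP/chain => k.
  by apply/subvP => w; rewrite !memS iterS; apply: fU.
by move/subvP=> h; apply/subvP => w; rewrite memS iterSr -memS => /h; rewrite !memS iterSr.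
Qed.

Lemma chain_subv n (Ls : nat -> {vspace L}) :
  (forall i, (i < n)%N -> (Ls i <= Ls i.+1)%VS) ->
  forall i j, (i <= j <= n)%N -> (Ls i <= Ls j)%VS.
Proof.
move=> h i j /andP[/subnK <-]; elim: (j - i)%N => [|d IH] hn; first exact: subvv.
by rewrite addSn in hn *; apply: subv_trans (IH (ltnW hn)) (h _ hn).
Qed.

Lemma chain_capv n (Ls : nat -> {vspace L}) U :
  (forall i, (i < n)%N -> (Ls i <= Ls i.+1)%VS /\ (\dim (Ls i.+1) <= (\dim (Ls i)).+1)%N) ->
  forall i, (i < n)%N -> (Ls i :&: U <= Ls i.+1 :&: U)%VS /\
     (\dim (Ls i.+1 :&: U) <= (\dim (Ls i :&: U)).+1)%N.
Proof.
move=> h i /h[LsS dimS]; split; first exact: capvS.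
have := dimv_sum_cap (Ls i) (Ls i.+1 :&: U); rewrite capvA (capv_idPl LsS).
have : (\dim (Ls i + Ls i.+1 :&: U) <= \dim (Ls i.+1))%N.
  by apply: dimvS; rewrite subv_add LsS capvSl.
lia.
Qed.

End VspaceFacts.
Arguments fit_exp {F} L.

Section LieAlgebra.
Variables (F : fieldType) (L : vectType F) (br : L -> L -> L).
Hypothesis hbr : lie_bracket br.
Implicit Types (U V W H K : {vspace L}).

Local Notation ideal := (lie_ideal br).
Local Notation subalg := (subalgebra br).

Definition brl x : L -> L := br x.
Definition brr x : L -> L := br^~ x.
Fact brl_is_linear x : linear (brl x).
Proof. by case: hbr => _ h _ _ a y z; rewrite /brl h. Qed.
Fact brr_is_linear x : linear (brr x).
Proof. by case: hbr => h _ _ _ a y z; rewrite /brr h. Qed.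
HB.instance Definition _ x :=
  GRing.isLinear.Build F L L *:%R (brl x) (brl_is_linear x).
HB.instance Definition _ x :=
  GRing.isLinear.Build F L L *:%R (brr x) (brr_is_linear x).
Definition adl x : 'End(L) := linfun (brl x).
Definition adr x : 'End(L) := linfun (brr x).
Lemma adlE x y : adl x y = br x y. Proof. by rewrite lfunE. Qed.
Lemma adrE x y : adr x y = br y x. Proof. by rewrite lfunE. Qed.

Lemma brDr x y z : br x (y + z) = br x y + br x z. Proof. exact: (linearD (brl x)). Qed.
Lemma brDl x y z : br (y + z) x = br y x + br z x. Proof. exact: (linearD (brr x)). Qed.
Lemma brZr a x y : br x (a *: y) = a *: br x y. Proof. exact: (linearZZ (brl x)). Qed.
Lemma brZl a x y : br (a *: y) x = a *: br y x. Proof. exact: (linearZZ (brr x)). Qed.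
Lemma br0r x : br x 0 = 0. Proof. exact: (linear0 (brl x)). Qed.
Lemma brNr x y : br x (- y) = - br x y. Proof. exact: (linearN (brl x)). Qed.
Lemma brBr x y z : br x (y - z) = br x y - br x z. Proof. exact: (linearB (brl x)). Qed.
Lemma brBl x y z : br (y - z) x = br y x - br z x. Proof. exact: (linearB (brr x)). Qed.
Lemma br_sumr I r (P : pred I) (w : I -> L) x :
  br x (\sum_(i <- r | P i) w i) = \sum_(i <- r | P i) br x (w i).
Proof. exact: (linear_sum (brl x)). Qed.
Lemma br_suml I r (P : pred I) (w : I -> L) x :
  br (\sum_(i <- r | P i) w i) x = \sum_(i <- r | P i) br (w i) x.
Proof. exact: (linear_sum (brr x)). Qed.

Lemma brxx x : br x x = 0. Proof. by case: hbr. Qed.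

Lemma br_antisym x y : br y x = - br x y.
Proof.
have := brxx (x + y); rewrite brDl !brDr !brxx add0r addr0 => /eqP.
by rewrite addr_eq0 => /eqP ->; rewrite opprK.
Qed.

Lemma br_jacobi x y z : br x (br y z) = br (br x y) z + br y (br x z).
Proof.
case: hbr => _ _ _ /(_ x y z) J.
have -> : br x (br y z) = - (br y (br z x) + br z (br x y)).
  by apply/eqP; rewrite -addr_eq0 addrA J.
by rewrite opprD addrC (br_antisym (br x y) z) (br_antisym x z) brNr !opprK.
Qed.

Lemma ideal_of_left U : (forall x u, u \in U -> br x u \in U) -> ideal U.
Proof. by move=> h x u uU; split; [apply: h | rewrite br_antisym memvN h]. Qed.
Lemma idealL U x u : ideal U -> u \in U -> br x u \in U.
Proof. by move=> h /(h x) []. Qed.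
Lemma idealR U x u : ideal U -> u \in U -> br u x \in U.
Proof. by move=> h /(h x) []. Qed.
Lemma ideal_subalg U : ideal U -> subalg U.
Proof. by move=> h u v _; apply: idealL. Qed.
Lemma idealD U V : ideal U -> ideal V -> ideal (U + V)%VS.
Proof.
move=> hU hV; apply: ideal_of_left => x _ /memv_addP[u uU [v vV ->]].
by rewrite brDr memv_add // idealL.
Qed.
Lemma idealI U V : ideal U -> ideal V -> ideal (U :&: V)%VS.
Proof.
by move=> hU hV; apply: ideal_of_left => x w /memv_capP[wU wV]; rewrite memv_cap !idealL.
Qed.
Lemma ideal0 : ideal 0%VS.
Proof. by apply: ideal_of_left => x u; rewrite memv0 => /eqP ->; rewrite br0r mem0v. Qed.
Lemma ideal_full : ideal fullv.
Proof. by apply: ideal_of_left => x u _; rewrite memvf. Qed.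

Definition ad_shift y (l : F) : 'End(L) := (adl y - l *: \1)%VF.

Lemma ad_shiftE y l v : ad_shift y l v = br y v - l *: v.
Proof. by rewrite add_lfunE opp_lfunE scale_lfunE id_lfunE adlE. Qed.

Lemma ad_shiftD y l u v : ad_shift y l (u + v) = ad_shift y l u + ad_shift y l v.
Proof. exact: raddfD. Qed.

Lemma ad_shiftB y l u v : ad_shift y l (u - v) = ad_shift y l u - ad_shift y l v.
Proof. exact: raddfB. Qed.

Lemma ad_shiftZ y l c v : ad_shift y l (c *: v) = c *: ad_shift y l v.
Proof. exact: linearZ. Qed.

Lemma ad_shift0 y v : ad_shift y 0 v = br y v.
Proof. by rewrite ad_shiftE scale0r subr0. Qed.

Lemma ad_shift_ideal U y l v : ideal U -> v \in U -> ad_shift y l v \in U.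
Proof. by move=> hU vU; rewrite ad_shiftE memvB ?memvZ ?idealL. Qed.

Lemma iter_ad_shift_ideal U y l n v : ideal U -> v \in U -> iter n (ad_shift y l) v \in U.
Proof. by move=> hU vU; elim: n => //= n IH; apply: ad_shift_ideal. Qed.

Lemma ad_shift_scalar y l m v : ad_shift y m v = ad_shift y l v + (l - m) *: v.
Proof. by rewrite !ad_shiftE scalerBl addrA subrK. Qed.

Lemma ad_shiftC y l m v : ad_shift y l (ad_shift y m v) = ad_shift y m (ad_shift y l v).
Proof.
rewrite !ad_shiftE !brBr !brZr !scalerBr !scalerA (mulrC m l).
by rewrite !opprB !addrA [LHS]addrAC [RHS]addrAC; congr (_ + _); apply: addrAC.
Qed.

Lemma iter_ad_shiftC y l m n v :
  iter n (ad_shift y l) (ad_shift y m v) = ad_shift y m (iter n (ad_shift y l) v).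
Proof. by elim: n => //= n ->; rewrite ad_shiftC. Qed.

Lemma ad_shift_br y l m u v :
  ad_shift y (l + m) (br u v) = br (ad_shift y l u) v + br u (ad_shift y m v).
Proof.
by rewrite !ad_shiftE br_jacobi brBl brBr brZl brZr scalerDl opprD addrACA.
Qed.

(* Leibniz rule for the derivation ad y. *)
Lemma iter_ad_shift_br K y l m a b u v : ideal K ->
  iter a (ad_shift y l) u \in K -> iter b (ad_shift y m) v \in K ->
  iter (a + b) (ad_shift y (l + m)) (br u v) \in K.
Proof.
move=> hK; elim: a b u v => [|a IHa] b u v.
  by move=> uK _; apply: iter_ad_shift_ideal => //; apply: idealR.
elim: b u v => [|b IHb] u v hu.
  by move=> vK; apply: iter_ad_shift_ideal => //; apply: idealL.
move=> hv; rewrite addnS iterSr ad_shift_br iter_lfunD rpredD //.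
  by rewrite addSn -addnS; apply: IHa; rewrite -?iterSr.
by apply: IHb; rewrite -?iterSr.
Qed.

(* The centraliser of U modulo V, cut out by the conditions [z, u_i] \in V on a basis
   (u_i) of U. *)
Definition centm U V : {vspace L} :=
  (\bigcap_(i < \dim U) (adr (vbasis U)`_i @^-1: V))%VS.

Lemma centmP U V z : reflect (forall u, u \in U -> br z u \in V) (z \in centm U V).
Proof.
apply: (iffP idP) => [zC u uU | h].
  rewrite (coord_vbasis uU) br_sumr; apply: rpred_sum => i _; rewrite brZr rpredZ //.
  have /subvP := bigcapv_inf i (P := xpredT)
    (Us := fun i => (adr (vbasis U)`_i @^-1: V)%VS) isT (subvv _).
  by move/(_ z zC); rewrite -memv_preim adrE.
rewrite memvE; apply/subv_bigcapP => i _; rewrite -memvE -memv_preim adrE.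
by apply/h/vbasis_mem/mem_nth; rewrite size_tuple.
Qed.

Definition derived : {vspace L} := (\sum_(i < \dim {:L}) \sum_(j < \dim {:L})
   <[br (vbasis fullv)`_i (vbasis fullv)`_j]>)%VS.

Lemma mem_derived u v : br u v \in derived.
Proof.
have basis (w : L) := coord_vbasis (memvf w).
rewrite (basis u) br_suml; apply: rpred_sum => i _; rewrite brZl rpredZ //.
rewrite (basis v) br_sumr; apply: rpred_sum => j _; rewrite brZr rpredZ //.
pose e k := (vbasis (fullv : {vspace L}))`_k.
apply: (subvP (sumv_sup i (P := xpredT)
  (Vs := fun i => \sum_(j < \dim {:L}) <[br (e i) (e j)]>)%VS isT (subvv _))).
apply: (subvP (sumv_sup j (P := xpredT)
  (Vs := fun j => <[br (e i) (e j)]>)%VS isT (subvv _))).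
exact: memv_line.
Qed.

Lemma derived_min U : (forall u v, br u v \in U) -> (derived <= U)%VS.
Proof. by move=> h; apply/subv_sumP => i _; apply/subv_sumP => j _; rewrite -memvE. Qed.

Lemma ideal_derived : ideal derived.
Proof. by apply: ideal_of_left => x u _; apply: mem_derived. Qed.

Definition ideal_chain K V := exists n (Ls : nat -> {vspace L}),
  [/\ Ls 0%N = K, Ls n = V, forall i, (i <= n)%N -> ideal (Ls i)
    & forall i, (i < n)%N -> (Ls i <= Ls i.+1)%VS /\ (\dim (Ls i.+1) <= (\dim (Ls i)).+1)%N].

Lemma ideal_chain_strict K V : ideal_chain K V -> exists n (Ls : nat -> {vspace L}),
  [/\ Ls 0%N = K, Ls n = V, forall i, (i <= n)%N -> ideal (Ls i)
    & forall i, (i < n)%N -> (Ls i <= Ls i.+1)%VS /\ \dim (Ls i.+1) = (\dim (Ls i)).+1].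
Proof.
case=> n; elim: n K => [|n IH] K [Ls [L0 Ln hLs hLS]].
  by exists 0%N, Ls; split=> // i; rewrite ltn0.
have [m [Ms [M0 Mm hMs hMS]]] := IH (Ls 1%N) (ex_intro _ (fun i => Ls i.+1)
  (And4 erefl Ln (fun i hi => hLs i.+1 hi) (fun i hi => hLS i.+1 hi))).
have [L01 dL01] := hLS 0%N isT.
have [e|ne] := eqVneq (Ls 1%N) K; first by exists m, Ms; rewrite M0 e.
exists m.+1, (fun i => if i is i'.+1 then Ms i' else K); split=> //.
  by case=> [|i] hi; [rewrite -L0; apply: hLs | apply: hMs].
case=> [|i] hi; last exact: hMS.
rewrite M0 -L0; split=> //; apply/eqP; rewrite eqn_leq dL01 ltnNge.
by apply: contra_neqN ne => hd; rewrite -L0 (subv_dim_eq L01 hd).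
Qed.

Lemma supersolvable_ideal_chain : supersolvable br <-> ideal_chain 0%VS fullv.
Proof.
split; last by move/ideal_chain_strict.
case=> n [Ls [L0 Ln hLs hLS]]; exists n, Ls; split=> // i /hLS[-> ->]; split=> //.
Qed.

Lemma strict_core_subv U K : strict_core br U K -> (K <= U)%VS.
Proof. by case=> _; apply. Qed.

Lemma strict_core_completion M C K :
  completion br M C -> strict_core br C K -> (K <= M)%VS.
Proof. by case=> _ _ hC [_]; apply=> I hI IC IneC; apply: hC => //; apply: ideal_subalg. Qed.

Lemma ideal_chain_ideal_index M : ideal_chain 0%VS fullv -> ideal_index_is br M 1.
Proof.
case=> n [Ls [L0 Ln hLs hLS]] C K [hC idC] hK.
have KC := strict_core_subv hK; have KM := strict_core_completion hC hK.
case: hC => _ /negP CM _; have Cn : (C <= Ls n)%VS by rewrite Ln subvf.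
have [[|i] [[hi Ci] imin]] := nat_minimal (P := fun i => (i <= n)%N /\ (C <= Ls i)%VS)
  (ex_intro _ n (conj (leqnn n) Cn)).
  by case: CM; apply: subv_trans Ci _; rewrite L0 sub0v.
have [_] := chain_capv C hLS hi; rewrite (capv_idPr Ci) => dimC.
have capK : (Ls i :&: C <= K)%VS.
  case: hK => hK _; apply: hK; [exact/idealI/idC/hLs/ltnW | exact: capvSr |].
  apply/negP => /eqP e; suff: (i.+1 <= i)%N by rewrite ltnn.
  by apply: imin; split; [exact: ltnW | rewrite -e capvSl].
have KltC : (\dim K < \dim C)%N.
  by rewrite ltnNge; apply: contra_notN CM => /(subv_dim_eq KC) <-.
by have := dimvS capK; lia.
Qed.

Lemma strict_core_exists U : exists K, ideal K /\ strict_core br U K.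
Proof.
pose ub V := forall I, ideal I -> (I <= U)%VS -> I != U -> (I <= V)%VS.
have [K [[hK Kmin] Kmax]] := vspace_max_dim (P := fun V => ideal V /\ forall W, ub W -> (V <= W)%VS)
   (ex_intro _ 0%VS (conj ideal0 (fun W _ => sub0v W))).
exists K; split=> //; split=> // I hI IU IneU.
have KI : ideal (K + I)%VS /\ forall W, ub W -> (K + I <= W)%VS.
  by split=> [|W hW]; [exact: idealD | rewrite subv_add Kmin // hW].
by rewrite (subv_dim_eq (addvSl K I) (Kmax _ KI)) addvSr.
Qed.

Lemma maximal_subalgebra_above U : subalg U -> U != fullv%VS ->
  exists M, maximal_subalgebra br M /\ (U <= M)%VS.
Proof.
move=> hU Uf.
have [M [[hM [UM Mf]] Mmax]] := vspace_max_dim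
  (P := fun V => subalg V /\ (U <= V)%VS /\ V != fullv%VS)
  (ex_intro _ U (conj hU (conj (subvv U) Uf))).
exists M; split=> //; split=> // V hV MV.
case: (classic (V = fullv%VS)) => Vf; [by right | left].
by apply/esym/subv_dim_eq/Mmax => //; do 2!split=> //; [exact: subv_trans MV | exact/eqP].
Qed.

Definition chief K H := [/\ ideal K, ideal H, (K <= H)%VS, K <> H &
  forall J, ideal J -> (K <= J)%VS -> (J <= H)%VS -> J = K \/ J = H].

(* A chief factor H/K not contained in some maximal subalgebra M >= K: the minimal ideals
   C <= H with C not in M are ideal completions of M, and C + K = H, C :&: K = k(C). *)
Lemma chief_dim_supplemented K H M :
  (forall M, maximal_subalgebra br M -> ideal_index_is br M 1) -> chief K H ->
  maximal_subalgebra br M -> (K <= M)%VS -> ~ (H <= M)%VS -> \dim H = (\dim K).+1.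
Proof.
move=> eta1 [hK hH KH _ hchief] hM KM HM.
have [C [[hC CH CM] Cmin]] := vspace_min_dim
  (P := fun V => [/\ ideal V, (V <= H)%VS & ~ (V <= M)%VS]) (ex_intro _ H (And3 hH (subvv H) HM)).
have compl : ideal_completion br M C.
  do 2!split=> //; [exact: ideal_subalg | exact/negP |].
  move=> I _ IC IneC hI; apply: NNPP => IM; move/negP: IneC; apply.
  by apply/eqP/subv_dim_eq/Cmin => //; split=> //; apply: subv_trans CH.
have [S [hS hSC]] := strict_core_exists C.
have SC := strict_core_subv hSC; have SM := strict_core_completion compl.1 hSC.
have CKS : (C :&: K <= S)%VS.
  case: hSC => hSC _; apply: hSC; [exact: idealI | exact: capvSl |].
  by apply/negP => /eqP e; apply: CM; rewrite -e (subv_trans (capvSr _ _)).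
have SK : (S <= K)%VS.
  case: (hchief (S + K)%VS (idealD hS hK) (addvSr _ _)).
  - by rewrite subv_add KH (subv_trans SC CH).
  - by move=> e; rewrite -e addvSl.
  by move=> e; case: HM; rewrite -e subv_add SM KM.
have eS : (C :&: K)%VS = S by apply: subv_anti; rewrite CKS subv_cap SC SK.
have eH : (C + K)%VS = H.
  case: (hchief (C + K)%VS (idealD hC hK) (addvSr _ _)) => // [|e].
    by rewrite subv_add CH KH.
  by case: CM; rewrite (subv_trans _ KM) // -e addvSl.
have := dimv_sum_cap C K; rewrite eH eS; have := dimvS SC.
by have := eta1 M hM C S compl hSC; lia.
Qed.

Section GeneralizedEigenspaces.
Variables (K : {vspace L}) (y : L).
Hypothesis hK : ideal K.

Definition geneig l := (lfun_iter (ad_shift y l) (fit_exp L) @^-1: K)%VS.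

Lemma mem_geneig l v : (v \in geneig l) = (iter (fit_exp L) (ad_shift y l) v \in K).
Proof. by rewrite -memv_preim lfun_iterE. Qed.

Lemma mem_geneig_iter l m v : iter m (ad_shift y l) v \in K -> v \in geneig l.
Proof. by rewrite mem_geneig; apply: iter_stable => w; apply: ad_shift_ideal. Qed.

Lemma geneig_sup l : (K <= geneig l)%VS.
Proof. by apply/subvP => v vK; exact: (mem_geneig_iter (m := 0)). Qed.

Lemma geneig_ad_shift l m v : v \in geneig l -> ad_shift y m v \in geneig l.
Proof. by rewrite !mem_geneig iter_ad_shiftC; apply: ad_shift_ideal. Qed.

Lemma geneig_br l m u v :
  u \in geneig l -> v \in geneig m -> br u v \in geneig (l + m).
Proof.
rewrite !(mem_geneig _ u) !(mem_geneig _ v) => hu hv.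
by apply: (mem_geneig_iter (m := (fit_exp L + fit_exp L)%N)); apply: iter_ad_shift_br.
Qed.

(* ad y - m acts on the generalized l-eigenspace modulo K as the unit (m - l) plus a
   nilpotent map. *)
Lemma geneig_injmod l m v : l != m -> v \in geneig l -> ad_shift y m v \in K -> v \in K.
Proof.
move=> lm vE hm; set c := m - l.
have iterE i : iter i (ad_shift y l) v - c ^+ i *: v \in K.
  elim: i => [|i IH] /=; first by rewrite scale1r subrr mem0v.
  have -> : ad_shift y l (iter i (ad_shift y l) v) - c ^+ i.+1 *: v =
      ad_shift y l (iter i (ad_shift y l) v - c ^+ i *: v) + c ^+ i *: ad_shift y m v.
    rewrite ad_shiftB ad_shiftZ (ad_shift_scalar y m l v) scalerDr scalerA -exprSr.
    by rewrite opprD addrA addrAC subrK.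
  by rewrite rpredD ?rpredZ // ad_shift_ideal.
have vN : iter (fit_exp L) (ad_shift y l) v \in K by rewrite -mem_geneig.
have := memvB vN (iterE (fit_exp L)); rewrite opprB addrC subrK => cv.
have c0 : c ^+ (fit_exp L) != 0 by rewrite expf_neq0 // subr_eq0 eq_sym.
by have := memvZ (c ^+ (fit_exp L))^-1 cv; rewrite scalerA mulVf // scale1r.
Qed.

Lemma geneig_surj l m : l != m -> (geneig l <= ad_shift y m @: geneig l + K)%VS.
Proof.
move=> lm; apply: injective_mod_surjective; first exact: geneig_sup.
- by move=> v; apply: geneig_ad_shift.
- by move=> v; apply: ad_shift_ideal.
by move=> v; apply: geneig_injmod.
Qed.

End GeneralizedEigenspaces.

Section Splitting.
Variables (K H : {vspace L}) (y : L) (S : F -> Prop).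
Variables (n : nat) (Ls : nat -> {vspace L}) (d : nat -> F).
Hypotheses (hK : ideal K) (hH : ideal H) (KH : (K <= H)%VS).
Hypotheses (L0 : Ls 0%N = H) (Ln : Ls n = fullv).
Hypothesis hd : forall j, (j < n)%N -> forall w, w \in Ls j.+1 -> ad_shift y (d j) w \in Ls j.
Hypotheses (hS : forall j, (j < n)%N -> S (d j)) (S_add : forall a b, S a -> S b -> S (a + b)).
Hypothesis injmod : forall l a, S l -> a \in H -> ad_shift y l a \in K -> a \in K.

Local Notation E := (geneig K y).

(* K plus the generalized eigenspaces of ad y for its eigenvalues on the factors of the
   chain: a subalgebra meeting H in K (injectivity) and spanning L together with H. *)
Let U m := (K + \sum_(j < m) E (d j))%VS.

Let KU m : (K <= U m)%VS. Proof. exact: addvSl. Qed.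

Let EU m (j : 'I_m) : (E (d j) <= U m)%VS.
Proof. exact: subv_trans (sumv_sup j isT (subvv _)) (addvSr _ _). Qed.

Let U_ad_shift m l v : v \in U m -> ad_shift y l v \in U m.
Proof.
move=> vU; rewrite memv_preim; move: v vU; apply/subvP; rewrite subv_add.
apply/andP; split.
  by apply/subvP => v vK; rewrite -memv_preim (subvP (KU m)) // ad_shift_ideal.
apply/subv_sumP => j _; apply/subvP => v vE; rewrite -memv_preim.
by apply: (subvP (EU j)); apply: geneig_ad_shift.
Qed.

Let U_iter m l k v : v \in U m -> iter k (ad_shift y l) v \in U m.
Proof. by move=> vU; elim: k => //= k; apply: U_ad_shift. Qed.

Let iter_injmod l k a : S l -> a \in H -> iter k (ad_shift y l) a \in K -> a \in K.
Proof.
move=> Sl aH; elim: k a aH => // k IH a aH; rewrite iterSr => /IH.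
by move/(_ (ad_shift_ideal _ _ hH aH)); apply: injmod.
Qed.

Let capU m : (m <= n)%N -> forall a, a \in H -> a \in U m -> a \in K.
Proof.
elim: m => [|m IH] hm a aH; first by rewrite /U big_ord0 addv0.
rewrite /U big_ord_recr /= addvA => /memv_addP[b bU [e eE Ea]].
apply: (iter_injmod (k := fit_exp L) (hS hm) aH).
apply: IH; [exact: ltnW | exact: iter_ad_shift_ideal |].
by rewrite Ea iter_lfunD rpredD ?(U_iter _ _ bU) // (subvP (KU m)) // -mem_geneig.
Qed.

Let U_surj l : (U n <= ad_shift y l @: U n + E l)%VS.
Proof.
rewrite subv_add (subv_trans (geneig_sup y hK _) (addvSr _ _)) //=.
apply/subv_sumP => k _; have [->|ne] := eqVneq (d k) l; first exact: addvSr.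
apply: subv_trans (geneig_surj y hK ne) _.
rewrite subv_add (subv_trans (geneig_sup y hK _) (addvSr _ _)) andbT.
exact: subv_trans (limgS _ (EU k)) (addvSl _ _).
Qed.

Let H_surj l : S l -> (H <= ad_shift y l @: H + K)%VS.
Proof.
move=> Sl; apply: injective_mod_surjective => // [v|v|v]; try exact: ad_shift_ideal.
exact: injmod.
Qed.

Let chain_spanned j : (j <= n)%N -> (Ls j <= U n + H)%VS.
Proof.
elim: j => [|j IH] hj; first by rewrite L0 addvSr.
apply/subvP => w wL; set l := d j.
have /memv_addP[u uU [h hH' Ehw]] := subvP (IH (ltnW hj)) _ (hd hj wL).
have /memv_addP[_ /memv_imgP[u' u'U ->] [e eE Eu]] := subvP (U_surj l) u uU.
have /memv_addP[_ /memv_imgP[h' h'H ->] [k kK Eh]] := subvP (H_surj (hS hj)) h hH'.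
have wE : w - (u' + h') \in E l.
  apply: (mem_geneig_iter hK (m := (fit_exp L).+1)); rewrite iterSr -mem_geneig.
  rewrite ad_shiftB ad_shiftD Ehw Eu Eh addrACA [X in X - _]addrC addrK.
  by rewrite rpredD // (subvP (geneig_sup y hK _)).
rewrite -[w](subrK (u' + h')) addrA memv_add // rpredD //.
exact: (subvP (EU (Ordinal hj))).
Qed.

Let geneig_subU l m v : S l -> iter m (ad_shift y l) v \in K -> v \in U n.
Proof.
move=> Sl hv; have full : (fullv <= U n + H)%VS by rewrite -Ln chain_spanned.
have /memv_addP[u uU [h hH' Ev]] := subvP full v (memvf v).
suff hK' : h \in K by rewrite Ev rpredD // (subvP (KU n)).
apply: (iter_injmod (k := m) Sl hH'); apply: (capU (leqnn n)).
  exact: iter_ad_shift_ideal.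
have -> : iter m (ad_shift y l) h = iter m (ad_shift y l) v - iter m (ad_shift y l) u.
  by rewrite Ev iter_lfunD addrC addKr.
by rewrite rpredB ?(U_iter _ _ uU) // (subvP (KU n)).
Qed.

Let subalg_U : subalg (U n).
Proof.
have Ebr (j : 'I_n) e v : e \in E (d j) -> v \in U n -> br e v \in U n.
  move=> eE vU; rewrite -adlE memv_preim; move: v vU; apply/subvP; rewrite subv_add.
  apply/andP; split.
    by apply/subvP => v vK; rewrite -memv_preim adlE (subvP (KU n)) // idealL.
  apply/subv_sumP => k _; apply/subvP => v vE; rewrite -memv_preim adlE.
  apply: (geneig_subU (m := fit_exp L) (S_add (hS (ltn_ord j)) (hS (ltn_ord k)))).
  by rewrite -mem_geneig; apply: geneig_br.
move=> u v uU vU; rewrite -adrE memv_preim; move: u uU; apply/subvP; rewrite subv_add.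
apply/andP; split.
  by apply/subvP => u uK; rewrite -memv_preim adrE (subvP (KU n)) // idealR.
by apply/subv_sumP => k _; apply/subvP => u uE; rewrite -memv_preim adrE (Ebr k).
Qed.

Lemma chief_complement :
  exists X, [/\ subalg X, (K <= X)%VS, (fullv <= X + H)%VS & (X :&: H <= K)%VS].
Proof.
exists (U n); split; [exact: subalg_U | exact: KU | by rewrite -Ln chain_spanned |].
by apply/subvP => a /memv_capP[aU aH]; apply: (capU (leqnn n)).
Qed.

End Splitting.

Lemma subalg_add_line U s : subalg U -> (forall u, u \in U -> br u s \in U) ->
  subalg (U + <[s]>)%VS.
Proof.
move=> hU hs _ _ /memv_addP[u1 u1U [_ /vlineP[a ->] ->]] /memv_addP[u2 u2U [_ /vlineP[b ->] ->]].
rewrite brDl brZl !brDr !brZr brxx scaler0 addr0; apply: (subvP (addvSl U <[s]>)).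
have hs' u : u \in U -> br s u \in U by move=> uU; rewrite br_antisym rpredN hs.
by rewrite !rpredD ?rpredZ ?hs ?hs' //; apply: hU.
Qed.

Section Engel.
Variables (K H : {vspace L}).
Hypotheses (hK : ideal K) (KH : (K <= H)%VS).
Hypothesis nil : forall x, x \in H -> forall v, iter (fit_exp L) (br x) v \in K.

(* A weak form of Engel's theorem: U acting on W/V (with K <= V) has a nonzero
   fixed vector. *)
Definition fixes_mod U := forall W V, (K <= V)%VS -> ~ (W <= V)%VS ->
  (forall s w, s \in U -> w \in W -> br s w \in W) ->
  (forall s k, s \in U -> k \in V -> br s k \in V) ->
  (forall k w, k \in K -> w \in W -> br k w \in V) ->
  exists v, [/\ v \in W, v \notin V & forall s, s \in U -> br s v \in V].

Lemma fixes_mod_add_line T s : (K <= T)%VS -> s \in H ->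
  (forall t, t \in T -> br t s \in T) -> fixes_mod T -> fixes_mod (T + <[s]>)%VS.
Proof.
move=> KT sH hsT hT W V KV WV hSW hSV hKW.
have sT t : t \in T -> t \in (T + <[s]>)%VS by apply/subvP/addvSl.
have sS : s \in (T + <[s]>)%VS by apply/(subvP (addvSr _ _))/memv_line.
have [v0 [v0W v0V hv0]] := hT W V KV WV (fun t w tT => hSW t w (sT t tT))
  (fun t k tT => hSV t k (sT t tT)) hKW.
pose v i := iter i (br s) v0.
have vW i : v i \in W by elim: i => //= i; apply: hSW.
have vT i t : t \in T -> br t (v i) \in V.
  elim: i t => [|i IH] t tT //=; first exact: hv0.
  by rewrite br_jacobi rpredD ?IH ?hsT // hSV // IH.
have vN : v (fit_exp L) \in V by apply/(subvP KV)/nil.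
have [i [_ [vi vi1]]] := first_failure (P := fun i => v i \notin V) v0V (fun h => negP h vN).
exists (v i); split => // _ /memv_addP[t tT [_ /vlineP[c ->] ->]].
by rewrite brDl brZl rpredD ?vT // rpredZ //; apply: NNPP => /negP.
Qed.

Lemma fixes_mod_subalg U : subalg U -> (K <= U)%VS -> (U <= H)%VS -> fixes_mod U.
Proof.
move: {2}(\dim U).+1 (ltnSn (\dim U)) => m; elim: m U => // m IH U hm hU KU UH.
case: (boolP (U <= K)%VS) => UK.
  move=> W V _ /negP /subvPn[v vW vV] _ _ hKW.
  by exists v; split=> // s sU; apply/hKW/vW/(subvP UK).
have KneU : K <> U by move=> e; move: UK; rewrite e subvv.
have [T [[hT KT TU TneU] Tmax]] := vspace_max_dim
  (P := fun V => [/\ subalg V, (K <= V)%VS, (V <= U)%VS & V <> U])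
  (ex_intro _ K (And4 (ideal_subalg hK) (subvv K) KU KneU)).
have dT : (\dim T < \dim U)%N.
  rewrite ltn_neqAle dimvS // andbT; apply/eqP => hd.
  by apply: TneU; apply: subv_dim_eq; rewrite ?hd.
have IHT := IH T (leq_trans dT hm) hT KT (subv_trans TU UH).
have [s [sU sT hsT]] := IHT U T KT (fun UT => TneU (subv_anti (introT andP (conj TU UT))))
  (fun t u tT uU => hU t u (subvP TU t tT) uU) (fun t k tT kT => hT t k tT kT)
  (fun k u kK uU => (subvP KT) _ (idealR u hK kK)).
suff <- : (T + <[s]>)%VS = U by apply: fixes_mod_add_line => //; apply: (subvP UH).
apply: NNPP => hne; move/negP: sT; apply.
have T1 : [/\ subalg (T + <[s]>)%VS, (K <= T + <[s]>)%VS,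
             (T + <[s]> <= U)%VS & (T + <[s]>)%VS <> U].
  split=> //; first exact: subalg_add_line.
    exact: subv_trans KT (addvSl _ _).
  by rewrite subv_add TU -memvE.
rewrite (subv_dim_eq (addvSl T <[s]>) (Tmax _ T1)).
exact/(subvP (addvSr _ _))/memv_line.
Qed.

End Engel.

(* H/K lies in the Frattini subalgebra of L/K: no proper subalgebra supplements H modulo K. *)
Definition frattini_mod K H :=
  forall X, subalg X -> (K <= X)%VS -> (fullv <= X + H)%VS -> X = fullv%VS.

Lemma frattini_mod_maximal K H :
  (forall M, maximal_subalgebra br M -> (K <= M)%VS -> (H <= M)%VS) -> frattini_mod K H.
Proof.
move=> HM X hX KX XH; apply: NNPP => /eqP Xf.
have [M [hM XM]] := maximal_subalgebra_above hX Xf.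
have HsubM := HM M hM (subv_trans KX XM).
by case: hM => _ /negP Mf _; apply: Mf; rewrite eqEsubv subvf (subv_trans XH) // subv_add XM.
Qed.

Lemma iter_ad_shift0 x n v : iter n (ad_shift x 0) v = iter n (br x) v.
Proof. by elim: n => //= n ->; rewrite ad_shift0. Qed.

(* The Fitting null component E of ad x on L/K is a subalgebra, and the Fitting one
   component R = (ad x)^N L + K lies in H and satisfies L = E + R; hence E = L. *)
Lemma frattini_ad_nilpotent K H : ideal K -> ideal H -> (K <= H)%VS ->
  frattini_mod K H -> forall x, x \in H -> forall v, iter (fit_exp L) (br x) v \in K.
Proof.
move=> hK hH KH frat x xH.
suff Efull : geneig K x 0 = fullv by move=> v; rewrite -iter_ad_shift0 -mem_geneig Efull memvf.
pose g := lfun_iter (ad_shift x 0) (fit_exp L); set E := geneig K x 0.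
have gE v : g v = iter (fit_exp L) (ad_shift x 0) v by rewrite lfun_iterE.
have gK v : v \in K -> g v \in K by rewrite gE; apply: iter_ad_shift_ideal.
have subE : subalg E by move=> u w uE wE; have := geneig_br hK uE wE; rewrite addr0.
pose R := (g @: fullv + K)%VS.
have RH : (R <= H)%VS.
  rewrite subv_add KH andbT; apply/subvP => _ /memv_imgP[w _ ->].
  by rewrite gE /fit_exp iterS ad_shift0; apply: idealR.
have hR : (R <= g @: R + K)%VS.
  apply: injective_mod_surjective; first exact: addvSr.
  - move=> _ /memv_addP[_ /memv_imgP[w _ ->] [k kK ->]].
    by rewrite linearD /= memv_add ?gK // memv_img ?memvf.
  - exact: gK.
  move=> _ /memv_addP[_ /memv_imgP[w _ ->] [k kK ->]] /=.
  rewrite linearD => /memvB/(_ (gK _ kK)); rewrite addrK => ggw.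
  rewrite rpredD //.
  have : w \in E.
    by apply: (mem_geneig_iter hK (m := (fit_exp L + fit_exp L)%N)); rewrite iterD -!gE.
  by rewrite mem_geneig -gE.
apply: frat subE (geneig_sup x hK 0) _; apply/subvP => v _.
have gvR : g v \in R by rewrite (subvP (addvSl _ _)) // memv_img ?memvf.
have /memv_addP[_ /memv_imgP[r rR ->] [k kK Egv]] := subvP hR _ gvR.
have vE : v - r \in E by rewrite mem_geneig -gE linearB /= Egv addrC addKr.
by rewrite -[v](subrK r) memv_add // (subvP RH).
Qed.

Lemma ideal_centm U V : ideal U -> ideal V -> ideal (centm U V).
Proof.
move=> hU hV; apply: ideal_of_left => x z /centmP zC; apply/centmP => u uU.
have zC' w : w \in U -> br w z \in V by move=> wU; rewrite br_antisym rpredN zC.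
by rewrite br_antisym rpredN br_jacobi rpredD //; [apply/zC'/idealR | apply/idealL/zC'].
Qed.

Lemma codim1_eigenvalue A B y : ideal A -> ideal B -> (A <= B)%VS ->
  (\dim B <= (\dim A).+1)%N -> exists l, forall w, w \in B -> ad_shift y l w \in A.
Proof.
move=> hA hB AB dB; case: (boolP (B <= A)%VS) => [BA | /subvPn[w0 w0B w0A]].
  by exists 0 => w wB; apply/ad_shift_ideal/(subvP BA).
have dec := memv_add_line AB dB w0B w0A.
have [a [c [aA Ey]]] := dec _ (idealL y hB w0B).
exists c => _ /dec[a' [c' [a'A ->]]].
by rewrite ad_shiftD ad_shiftZ rpredD ?ad_shift_ideal // rpredZ // ad_shiftE Ey addrK.
Qed.

(* L acts on B/A by scalars, so commutators act trivially. *)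
Lemma codim1_derived_act A B : ideal A -> ideal B -> (A <= B)%VS ->
  (\dim B <= (\dim A).+1)%N -> forall p w, p \in derived -> w \in B -> br p w \in A.
Proof.
move=> hA hB AB dB p w pD wB; suff /subvP/(_ p pD)/centmP : (derived <= centm B A)%VS by apply.
apply: derived_min => u v; apply/centmP => {wB}w wB.
case: (boolP (B <= A)%VS) => [BA | /subvPn[w0 w0B w0A]]; first exact/idealL/(subvP BA).
have dec := memv_add_line AB dB w0B w0A.
have [a [c [aA ->]]] := dec w wB; rewrite brDr brZr rpredD ?idealL // rpredZ //.
have [au [cu [auA Eu]]] := dec _ (idealL u hB w0B).
have [av [cv [avA Ev]]] := dec _ (idealL v hB w0B).
have -> : br (br u v) w0 = br u (br v w0) - br v (br u w0) by rewrite br_jacobi addrK.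
rewrite Ev Eu !brDr !brZr Eu Ev !scalerDr !scalerA mulrC.
have cancel (a1 a2 b a3 a4 : L) : a1 + (a2 + b) - (a3 + (a4 + b)) = (a1 + a2) - (a3 + a4).
  by rewrite !addrA opprD addrACA subrr addr0.
by rewrite cancel rpredB // rpredD ?idealL // rpredZ.
Qed.

Lemma chief_injmod K H y l : chief K H ->
  (forall x a, a \in H -> ad_shift y l a \in K -> ad_shift y l (br x a) \in K) ->
  (exists2 a, a \in H & ad_shift y l a \notin K) ->
  forall a, a \in H -> ad_shift y l a \in K -> a \in K.
Proof.
move=> [hK hH KH _ hchief] hker [a0 a0H a0K].
pose J := (H :&: (ad_shift y l @^-1: K))%VS.
have memJ a : (a \in J) = (a \in H) && (ad_shift y l a \in K) by rewrite memv_cap -memv_preim.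
have hJ : ideal J.
  by apply: ideal_of_left => x a; rewrite !memJ => /andP[aH aK]; rewrite idealL ?hker.
have KJ : (K <= J)%VS by apply/subvP => k kK; rewrite memJ (subvP KH) ?ad_shift_ideal.
case: (hchief J hJ KJ (capvSl _ _)) => [eJ | eJ] a aH aK.
  by rewrite -eJ memJ aH.
by move: a0H; rewrite -eJ memJ (negPf a0K) andbF.
Qed.

Lemma frattini_chief_abelian K H : chief K H -> frattini_mod K H ->
  forall a b, a \in H -> b \in H -> br a b \in K.
Proof.
move=> [hK hH KH KneH hchief] frat.
have nil := frattini_ad_nilpotent hK hH KH frat.
have HK : ~ (H <= K)%VS by move=> HK; apply/KneH/subv_anti; rewrite KH HK.
have [v [vH vK hv]] := fixes_mod_subalg hK nil (ideal_subalg hH) KH (subvv H) (subvv K) HK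
  (fun s w _ wH => idealL s hH wH) (fun s k _ kK => idealL s hK kK)
  (fun k w kK _ => idealR w hK kK).
have hZ := idealI hH (ideal_centm hH hK).
have KZ : (K <= H :&: centm H K)%VS.
  by rewrite subv_cap KH; apply/subvP => k kK; apply/centmP => a _; apply: idealR.
case: (hchief _ hZ KZ (capvSl _ _)) => [eZ | eZ] a b aH bH.
  case/negP: vK; rewrite -eZ memv_cap vH; apply/centmP => c cH.
  by rewrite br_antisym rpredN hv.
have /memv_capP[_ /centmP aC] : a \in (H :&: centm H K)%VS by rewrite eZ.
exact: aC.
Qed.

Lemma chief_scalar_dim1 K H : chief K H ->
  (forall z, exists l, forall a, a \in H -> ad_shift z l a \in K) -> \dim H = (\dim K).+1.
Proof.
move=> [hK hH KH KneH hchief] scal.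
have /subvPn[h0 h0H h0K] : ~~ (H <= K)%VS by apply/negP => HK; apply/KneH/subv_anti; rewrite KH.
have hV : ideal (K + <[h0]>)%VS.
  apply: ideal_of_left => x _ /memv_addP[k kK [_ /vlineP[c ->] ->]].
  have [l hl] := scal x.
  rewrite brDr brZr -[br x h0](subrK (l *: h0)) -ad_shiftE scalerDr addrA.
  apply: memv_add; last by rewrite !memvZ // memv_line.
  by rewrite rpredD ?rpredZ ?hl //; apply: idealL.
case: (hchief _ hV (addvSl _ _)); first by rewrite subv_add KH -memvE.
  by move=> eK; case/negP: h0K; rewrite -eK; apply/(subvP (addvSr _ _))/memv_line.
by move=> <-; rewrite dim_add_line.
Qed.

Lemma chain_eigenvalues n (Ls : nat -> {vspace L}) y :
  (forall j, (j <= n)%N -> ideal (Ls j)) ->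
  (forall j, (j < n)%N -> (Ls j <= Ls j.+1)%VS /\ (\dim (Ls j.+1) <= (\dim (Ls j)).+1)%N) ->
  exists d : nat -> F,
    forall j, (j < n)%N -> forall w, w \in Ls j.+1 -> ad_shift y (d j) w \in Ls j.
Proof.
move=> hLs hLS.
have hex j : exists l, (j < n)%N -> forall w, w \in Ls j.+1 -> ad_shift y l w \in Ls j.
  case: (ltnP j n) => hj; last by exists 0.
  have [LsS dimS] := hLS j hj.
  by have [l hl] := codim1_eigenvalue y (hLs j (ltnW hj)) (hLs j.+1 hj) LsS dimS; exists l.
exists (fun j => proj1_sig (constructive_indefinite_description _ (hex j))) => j.
exact: (proj2_sig (constructive_indefinite_description _ (hex j))).
Qed.

Section FrattiniChiefFactor.
Variables (K H : {vspace L}) (n : nat) (Ls : nat -> {vspace L}).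
Hypotheses (hchief : chief K H) (frat : frattini_mod K H).
Hypotheses (L0 : Ls 0%N = H) (Ln : Ls n = fullv) (hLs : forall j, (j <= n)%N -> ideal (Ls j)).
Hypothesis hLS :
  forall j, (j < n)%N -> (Ls j <= Ls j.+1)%VS /\ (\dim (Ls j.+1) <= (\dim (Ls j)).+1)%N.

Let hK : ideal K. Proof. by case: hchief. Qed.
Let hH : ideal H. Proof. by case: hchief. Qed.
Let KH : (K <= H)%VS. Proof. by case: hchief. Qed.

Let no_complement y (S : F -> Prop) d :
  (forall j, (j < n)%N -> forall w, w \in Ls j.+1 -> ad_shift y (d j) w \in Ls j) ->
  (forall j, (j < n)%N -> S (d j)) -> (forall a b, S a -> S b -> S (a + b)) ->
  (forall l a, S l -> a \in H -> ad_shift y l a \in K -> a \in K) -> False.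
Proof.
move=> hd hS S_add injmod.
have [X [hX KX XH XHK]] := chief_complement hK hH KH L0 Ln hd hS S_add injmod.
case: hchief => _ _ _ KneH _; apply/KneH/subv_anti; rewrite KH.
by move: XHK; rewrite (frat hX KX XH) capfv.
Qed.

Lemma frattini_chief_scalar y : (derived <= centm H K)%VS ->
  exists l, forall a, a \in H -> ad_shift y l a \in K.
Proof.
move=> DC; apply: NNPP => nscal.
have injmod l : forall a, a \in H -> ad_shift y l a \in K -> a \in K.
  apply: chief_injmod => // [x a aH aK|].
    rewrite -[l]add0r ad_shift_br ad_shift0; apply: rpredD; last exact: idealL.
    by have /centmP := subvP DC _ (mem_derived y x); apply.
  apply: NNPP => hl; apply: nscal; exists l; move=> a aH.
  by apply: NNPP => aK; apply: hl; exists a => //; apply/negP.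
have [d hd] := chain_eigenvalues y hLs hLS.
by apply: (no_complement (S := fun _ => True) hd) => // l a _; apply: injmod.
Qed.

(* If L^2 does not centralise H/K, pick y in the first term of the chain
   Ls j :&: (H + L^2) outside centm H K: ad y is injective modulo K on H and nilpotent
   on L/H, so chief_complement yields a supplement of H modulo K. *)
Lemma frattini_chief_central : (derived <= centm H K)%VS.
Proof.
apply: NNPP => DC; set C := centm H K; pose I0 := (H + derived)%VS.
have hI0 : ideal I0 by apply: idealD => //; apply: ideal_derived.
pose Is j := (Ls j :&: I0)%VS.
have HC : (H <= C)%VS.
  by apply/subvP => a aH; apply/centmP => b bH; apply: (frattini_chief_abelian hchief frat).
have Is0 : (Is 0%N <= C)%VS by rewrite /Is L0 (subv_trans (capvSl _ _)).
have Isn : ~ (Is n <= C)%VS.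
  by rewrite /Is Ln capfv => IC; apply/DC/(subv_trans _ IC)/addvSr.
have [j [jn [IsC Is1C]]] := first_failure (P := fun j => (Is j <= C)%VS) Is0 Isn.
have /subvPn[y yI yC] : ~~ (Is j.+1 <= C)%VS by apply/negP.
have yIs : y \notin Is j by apply: contraNN yC; apply: (subvP IsC).
have [IsS dimIs] := chain_capv I0 hLS jn.
have dec := memv_add_line IsS dimIs yI yIs.
have injmod : forall a, a \in H -> ad_shift y 0 a \in K -> a \in K.
  apply: chief_injmod => // [x a aH aK|].
    rewrite -[0]addr0 ad_shift_br ad_shift0; apply: rpredD; last exact: idealL.
    have [i [c [iIs ->]]] := dec _ (idealR x (idealI (hLs jn) hI0) yI).
    rewrite brDl brZl rpredD ?rpredZ -?(ad_shift0 y) //.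
    by have /centmP := subvP IsC _ iIs; apply.
  apply: NNPP => hy; case/negP: yC; apply/centmP => a aH.
  by rewrite -ad_shift0; apply: NNPP => ya; apply: hy; exists a => //; apply/negP.
have nil j' : (j' < n)%N -> forall w, w \in Ls j'.+1 -> ad_shift y 0 w \in Ls j'.
  move=> hj' w wL; have [LsS dimS] := hLS hj'.
  have /memv_addP[h hH' [p pD ->]] := subvP (capvSr _ _) _ yI.
  have HLs : (H <= Ls j')%VS.
    by rewrite -L0; apply: (chain_subv (fun i hi => (hLS hi).1)); rewrite leq0n ltnW.
  rewrite ad_shift0 brDl rpredD ?(idealR _ (hLs (ltnW hj')) (subvP HLs _ hH')) //.
  exact: codim1_derived_act (hLs (ltnW hj')) (hLs hj') LsS dimS p w pD wL.
apply: (no_complement (S := eq^~ 0) nil) => // [a b -> ->|l a ->]; first exact: addr0.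
exact: injmod.
Qed.

End FrattiniChiefFactor.

Lemma chief_dim_frattini K H : chief K H -> frattini_mod K H -> ideal_chain H fullv ->
  \dim H = (\dim K).+1.
Proof.
move=> hchief frat [n [Ls [L0 Ln hLs hLS]]]; apply: chief_scalar_dim1 => // z.
have := frattini_chief_central hchief frat L0 Ln hLs hLS.
exact: frattini_chief_scalar hchief frat L0 Ln hLs hLS z.
Qed.


Lemma chief_exists K : ideal K -> K <> fullv%VS -> exists H, chief K H.
Proof.
move=> hK Kf.
have [H [[hH KH KneH] Hmin]] := vspace_min_dim (P := fun V => [/\ ideal V, (K <= V)%VS & K <> V])
  (ex_intro _ fullv%VS (And3 ideal_full (subvf K) Kf)).
exists H; split=> // J hJ KJ JH; case: (classic (K = J)) => [|ne]; [by left | right].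
exact/subv_dim_eq/Hmin.
Qed.

Lemma ideal_chain_refl V : ideal V -> ideal_chain V V.
Proof. by move=> hV; exists 0%N, (fun _ => V); split=> // i; rewrite ltn0. Qed.

Lemma ideal_chain_cons K H V : ideal K -> (K <= H)%VS -> (\dim H <= (\dim K).+1)%N ->
  ideal_chain H V -> ideal_chain K V.
Proof.
move=> hK KH dH [n [Ls [L0 Ln hLs hLS]]].
exists n.+1, (fun i => if i is i'.+1 then Ls i' else K); split=> //.
  by case=> [|i] hi //; apply: hLs.
by case=> [|i] hi; [rewrite L0 | apply: hLS].
Qed.

Section IdealIndexOne.
Hypothesis eta1 : forall M, maximal_subalgebra br M -> ideal_index_is br M 1.

Lemma chief_dim1 K H : chief K H -> ideal_chain H fullv -> \dim H = (\dim K).+1.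
Proof.
move=> hchief chainH.
case: (classic (exists M, [/\ maximal_subalgebra br M, (K <= M)%VS & ~ (H <= M)%VS])).
  by case=> M [hM KM HM]; apply: (chief_dim_supplemented eta1 hchief hM KM HM).
move=> hno; apply: chief_dim_frattini => //; apply: frattini_mod_maximal => M hM KM.
by apply: NNPP => HM; apply: hno; exists M.
Qed.

Lemma ideal_chain_full K : ideal K -> ideal_chain K fullv.
Proof.
move: {2}(\dim {:L} - \dim K)%N (leqnn (\dim {:L} - \dim K)) => m.
elim: m K => [|m IH] K hm hK; case: (classic (K = fullv%VS)) => [->|Kf].
- exact/ideal_chain_refl/ideal_full.
- by case: Kf; apply: subv_dim_eq (subvf K) _; lia.
- exact/ideal_chain_refl/ideal_full.
have [H hchief] := chief_exists hK Kf.
have [_ hH KH KneH _] := hchief.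
have dKH : (\dim K < \dim H)%N.
  by rewrite ltnNge; apply/negP => hd; apply/KneH/subv_dim_eq.
have chainH : ideal_chain H fullv by apply: IH hH; have := dimvS (subvf H); lia.
have dH := chief_dim1 hchief chainH.
by apply: ideal_chain_cons hK KH _ chainH; rewrite dH.
Qed.

End IdealIndexOne.

End LieAlgebra.

Theorem corollary2p8 (F : fieldType) (L : vectType F) (br : L -> L -> L)
  (hbr : lie_bracket br) :
  supersolvable br <->
  (forall M : {vspace L}, maximal_subalgebra br M -> ideal_index_is br M 1).
Proof.
rewrite supersolvable_ideal_chain; split.
  by move=> chain M _; apply: ideal_chain_ideal_index.
by move=> eta1; apply: ideal_chain_full (ideal0 hbr).
Qed.
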